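(* Let $G$ be a finite group, $S$ a subset of $G$, and $\sigma,\tau$ the inner automorphisms of $G$ induced by elements $\tilde\sigma,\tilde\tau\in G$ (i.e. $\sigma(x)=\tilde\sigma x\tilde\sigma^{-1}$, $\tau(x)=\tilde\tau x\tilde\tau^{-1}$). Suppose $G$ is a subgroup of a group $\mathcal G$ and there is $g\in\mathcal G$ with $g\tilde\sigma g^{-1}=\tilde\tau$, $gSg^{-1}=S$ and $gGg^{-1}=G$. Then $C(G,S)^\sigma\cong C(G,S)^\tau$ and $C_\Sigma(G,S)^\sigma\cong C_\Sigma(G,S)^\tau$. In particular, if $\tilde\sigma,\tilde\tau\in\mathfrak S_n$ lie in the same conjugacy class and $\sigma,\tau$ are the corresponding inner automorphisms of $\mathfrak S_n$, then for any subset $S$ of $\mathfrak S_n$ there is $g\in\mathfrak S_n$ such that, with $S'=\bigcup_{i}g^iSg^{-i}$, the graphs $C(\mathfrak S_n,S')^\sigma$ and $C(\mathfrak S_n,S')^\tau$ are isomorphic, and the graphs $C_\Sigma(\mathfrak S_n,S')^\sigma$ and $C_\Sigma(\mathfrak S_n,S')^\tau$ are isomorphic.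
   Context: For a group $G$, subset $S$ and automorphism $\sigma$, the twisted Cayley graph $C(G,S)^\sigma$ has vertex set $G$ and an edge from $x$ to $\sigma(xs)$ for each $s\in S$; the twisted Cayley sum graph $C_\Sigma(G,S)^\sigma$ has an edge from $x$ to $\sigma(x^{-1}s)$. *)

From mathcomp Require Import all_boot all_fingroup.
Set Implicit Arguments. Unset Strict Implicit. Unset Printing Implicit Defensive.
Local Open Scope group_scope.

(* Inner automorphism induced by [a]: x |-> a x a^-1 (NOT MathComp's x ^ a). *)
Definition inner {gT : groupType} (a x : gT) : gT := a * x * a^-1.

Definition finite_subgroup {gT : groupType} (G : {pred gT}) : Prop :=
  [/\ 1 \in G, {in G &, forall x y, x * y \in G},
      {in G, forall x, x^-1 \in G} & exists s : seq gT, {subset G <= s}].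

(* Edge relations of the twisted Cayley graph C(G,S)^sigma and the twisted
   Cayley sum graph C_Sigma(G,S)^sigma (vertex set G, supplied separately):
   an edge from x to sigma(x s), resp. sigma(x^-1 s), for each s in S. *)
Definition twisted_cayley {gT : groupType} (S : {pred gT}) (sigma : gT -> gT)
  (x y : gT) : Prop := exists2 s, s \in S & y = sigma (x * s).

Definition twisted_cayley_sum {gT : groupType} (S : {pred gT})
  (sigma : gT -> gT) (x y : gT) : Prop := exists2 s, s \in S & y = sigma (x^-1 * s).

Definition digraph_iso {T : Type} (V : {pred T}) (E1 E2 : T -> T -> Prop) : Prop :=
  exists f : T -> T,
    [/\ {in V, forall x, f x \in V}, {in V &, injective f},
        {in V, forall y, exists2 x, x \in V & f x = y}
      & {in V &, forall x y, E1 x y <-> E2 (f x) (f y)}].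

(* An injective group endomorphism f that maps V and S onto themselves sends
   the edge x -> a (x s) a^-1 to f x -> f a (f x f s) (f a)^-1, hence is an
   isomorphism between the twisted Cayley (sum) graphs on V twisted by
   conjugation by a and by f a.  Conjugation by g, which sends sig to tau, is
   such an f.  For
   tau = sig ^ h in S_n take g = h^-1: the union of the <[g]>-conjugates of S
   is g-stable because <[g]> absorbs multiplication by g. *)

From HB Require Import structures.
From mathcomp Require Import all_boot all_fingroup.
Set Implicit Arguments.
Unset Strict Implicit.
Unset Printing Implicit Defensive.

Local Open Scope group_scope.

Definition maps_onto {T : Type} (f : T -> T) (A : {pred T}) : Prop :=
  forall y, (exists2 x, x \in A & y = f x) <-> y \in A.

Lemma can_maps_onto_setT (T : finType) (f f' : T -> T) :
  cancel f' f -> maps_onto f [set: T].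
Proof. by move=> f'K y; split=> [_|_]; [rewrite inE | exists (f' y)]. Qed.

Lemma digraph_iso_inj_onto (T : Type) (V : {pred T}) (E1 E2 : T -> T -> Prop)
    (f : T -> T) :
  injective f -> maps_onto f V ->
  {in V &, forall x y, E1 x y <-> E2 (f x) (f y)} -> digraph_iso V E1 E2.
Proof.
move=> f_inj fV fE; exists f; split=> //.
- by move=> x xV; apply/fV; exists x.
- by move=> x y _ _; apply: f_inj.
- by move=> y /fV [x xV ->]; exists x.
Qed.

Section Inner.
Variable gT : groupType.
Implicit Types a b x y : gT.

Lemma innerE a x : inner a x = x ^ a^-1.
Proof. by rewrite conjgE invgK mulgA. Qed.

Lemma inner1 x : inner 1 x = x.
Proof. by rewrite innerE invg1 conjg1. Qed.

Lemma innerM a b x : inner (a * b) x = inner a (inner b x).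
Proof. by rewrite !innerE invMg conjgM. Qed.

Lemma innerK a : cancel (inner a) (inner a^-1).
Proof. by move=> x; rewrite -innerM mulVg inner1. Qed.

Lemma inner_inj a : injective (inner a).
Proof. exact: can_inj (innerK a). Qed.

Lemma inner_is_monoid_morphism a : monoid_morphism (inner a).
Proof. by split=> [|x y]; rewrite !innerE ?conj1g ?conjMg. Qed.

HB.instance Definition _ a :=
  isUMagmaMorphism.Build gT gT (inner a) (inner_is_monoid_morphism a).

Lemma gmulf_inner (f : UMagmaMorphism.type gT gT) a x :
  f (inner a x) = inner (f a) (f x).
Proof. by rewrite /inner !gmulfM gmulfV. Qed.

End Inner.

Section TwistedCayleyTransport.
Variables (gT : groupType) (f : UMagmaMorphism.type gT gT) (S : {pred gT}).
Hypotheses (f_inj : injective f) (fS : maps_onto f S).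

Lemma twisted_cayley_gmulf a x y :
  twisted_cayley S (inner a) x y <->
  twisted_cayley S (inner (f a)) (f x) (f y).
Proof.
split=> [[s sS ->] | [_ /fS [s sS ->] fy]].
  by exists (f s); [apply/fS; exists s | rewrite gmulf_inner (@gmulfM _ _ f)].
by exists s => //; apply: f_inj; rewrite fy gmulf_inner (@gmulfM _ _ f).
Qed.

Lemma twisted_cayley_sum_gmulf a x y :
  twisted_cayley_sum S (inner a) x y <->
  twisted_cayley_sum S (inner (f a)) (f x) (f y).
Proof.
split=> [[s sS ->] | [_ /fS [s sS ->] fy]].
  exists (f s); first by apply/fS; exists s.
  by rewrite gmulf_inner (@gmulfM _ _ f) (gmulfV f).
exists s => //; apply: f_inj.
by rewrite fy gmulf_inner (@gmulfM _ _ f) (gmulfV f).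
Qed.

Lemma twisted_cayley_iso_gmulf (V : {pred gT}) a :
  maps_onto f V ->
  digraph_iso V (twisted_cayley S (inner a)) (twisted_cayley S (inner (f a))) /\
  digraph_iso V (twisted_cayley_sum S (inner a))
                (twisted_cayley_sum S (inner (f a))).
Proof.
move=> fV; split; apply: (digraph_iso_inj_onto f_inj fV) => x y _ _.
  exact: twisted_cayley_gmulf.
exact: twisted_cayley_sum_gmulf.
Qed.

End TwistedCayleyTransport.

Section ConjugateUnion.
Variables (gT : finGroupType) (S : {set gT}).

Lemma maps_onto_conj_union (H : {group gT}) g : g \in H ->
  maps_onto (inner g) [set inner x s | x in H, s in S].
Proof.
move=> gH y; split=> [[_ /imset2P [x s xH sS ->] ->] | ].
  by apply/imset2P; exists (g * x) s; rewrite ?groupM ?innerM.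
case/imset2P=> x s xH sS ->.
exists (inner (g^-1 * x) s); last by rewrite -innerM mulKVg.
by apply/imset2P; exists (g^-1 * x) s; rewrite ?groupM ?groupV.
Qed.

Lemma cycle_conj_unionE g :
  [set inner (g ^+ i) s | i : 'I_#[g], s : gT in S] =
  [set inner x s | x in <[g]>, s in S].
Proof.
apply/setP=> y; apply/imset2P/imset2P=> [[i s _ sS ->] | ].
  by exists (g ^+ i) s; rewrite ?mem_cycle.
case=> x s /cyclePmin [i ltig ->] sS ->.
by exists (Ordinal ltig) s.
Qed.

End ConjugateUnion.

Theorem proposition4p3 :
  (forall (gT : groupType) (G S : {pred gT}) (sig tau g : gT),
      finite_subgroup G -> {subset S <= G} -> sig \in G -> tau \in G ->
      g * sig * g^-1 = tau ->
      (forall y, (exists2 s, s \in S & y = g * s * g^-1) <-> y \in S) ->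
      (forall y, (exists2 x, x \in G & y = g * x * g^-1) <-> y \in G) ->
      digraph_iso G (twisted_cayley S (inner sig)) (twisted_cayley S (inner tau)) /\
      digraph_iso G (twisted_cayley_sum S (inner sig))
                    (twisted_cayley_sum S (inner tau)))
  /\
  (forall (n : nat) (sig tau : 'S_n) (S : {set 'S_n}),
      tau \in sig ^: [set: 'S_n] ->
      exists g : 'S_n,
        let S' := [set g ^+ i * s * (g ^+ i)^-1 | i : 'I_#[g], s : 'S_n in S] in
        digraph_iso [set: 'S_n] (twisted_cayley S' (inner sig))
                                (twisted_cayley S' (inner tau)) /\
        digraph_iso [set: 'S_n] (twisted_cayley_sum S' (inner sig))
                                (twisted_cayley_sum S' (inner tau))).
Proof.
split=> [gT G S sig _ g _ _ _ _ <- gS gG | n sig _ S /imsetP [h _ ->]].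
  exact: (twisted_cayley_iso_gmulf (inner_inj (a := g)) gS sig gG).
exists h^-1 => S'.
have -> : sig ^ h = inner h^-1 sig by rewrite innerE invgK.
apply: twisted_cayley_iso_gmulf; first exact: inner_inj.
  rewrite /S' (cycle_conj_unionE S h^-1).
  exact: maps_onto_conj_union (cycle_id h^-1).
exact: can_maps_onto_setT (innerK h).
Qed.
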